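(* Let $\mathcal A\subset\mathbb R^n$ be compact with diameter $D_{\mathcal A}<\infty$, let $\mathcal X=\mathrm{conv}(\mathcal A)$ or $\mathcal X=\mathrm{lin}(\mathcal A)$, let $f$ be convex and differentiable with $L$-Lipschitz gradient, let $\eta\in(1,2)$, and let $\{x_t\}_{t\ge0}$ be generated by the AC-FW algorithm described in the context with Conditions (D) and (S) holding. Let $\{h_t\}_{t\ge0}$ denote the elements of $\mathcal G\cap\mathcal I_\eta$ in increasing order. Suppose there are constants $a>0$, $b\ge0$ with $|\mathcal G\cap\mathcal I_\eta\cap[t]|\ge at-b$ for all $t\ge0$, and a nonincreasing function $\rho:\mathbb N\to\mathbb R_+$ with $f(x_{h_t})-f(x^\star)\le \rho(t)$ for all $t\ge0$. Then for all $t\ge(b+1)/a$, $$f(x_t)-f(x^\star)\le \rho\bigl(\lceil at-b\rceil-1\bigr).$$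
   Context: $D_{\mathcal A}:=\sup_{x,y\in\mathcal A}\|x-y\|_2$; $\|\nabla f(x)-\nabla f(y)\|_2\le L\|x-y\|_2$. $x^\star$ is an optimal solution of $\min_{x\in\mathcal X}f(x)$. For $x\ne y$, $\ell(x,y):=2|f(y)-f(x)-\nabla f(x)^\top(y-x)|/\|y-x\|_2^2$, $\ell(x,x):=0$. AC-FW algorithm: given $\{r_t\}_{t\ge0}$ and a subroutine, pick $x_{-1}\in\mathcal A$, $x_0\in\arg\min_{v\in\mathcal A}\nabla f(x_{-1})^\top v$, $L_0:=\ell(x_{-1},x_0)$. For $t=0,1,\dots$: $v_t\in\arg\min_{v\in\mathcal A}\nabla f(x_t)^\top v$; the subroutine returns $d_t\in\mathbb R^n$, $\gamma_t^{\max}\in(0,\infty]$; $\gamma_t:=\min\{\nabla f(x_t)^\top d_t/(L_t\|d_t\|_2^2),\gamma_t^{\max}\}$; $\bar x_{t+1}:=x_t-\gamma_td_t$; $L_{t+1}:=\max\{\ell(x_t,\bar x_{t+1}),r_tL_t\}$; $x_{t+1}:=\bar x_{t+1}$ if $f(\bar x_{t+1})<f(x_t)$, else $x_{t+1}:=x_t$. $[t]:=\{0,\dots,t\}$; $\mathcal I_\eta:=\{t\ge0:L_{t+1}\le\eta L_t\}$; $\mathcal G:=\{t\ge0:\gamma_t^{\max}\ge1\text{ or }\gamma_t<\gamma_t^{\max}\}$. Condition (D): $r_t\in(0,1]$ for all $t$ and $\prod_{t\ge0}r_t\in(0,1]$. Condition (S): for all $t\ge0$: (i) $\|d_t\|_2\le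 D_{\mathcal A}$ and $x_t-\gamma d_t\in\mathcal X$ for all finite $\gamma\in[0,\gamma_t^{\max}]$; (ii) $\mathcal G$ is infinite; (iii) there is $R\ge1$ independent of $t$ with $\nabla f(x_t)^\top d_t\ge(f(x_t)-f(x^\star))/R$. *)

From HB Require Import structures.
From mathcomp Require Import all_boot all_order all_algebra.
From mathcomp Require Import all_classical all_reals all_analysis.
Set Implicit Arguments. Unset Strict Implicit. Unset Printing Implicit Defensive.
Import Order.TTheory GRing.Theory Num.Theory.
Import numFieldNormedType.Exports.
Local Open Scope classical_set_scope.
Local Open Scope ring_scope.

Section ACFWDefs.
Variables (R : realType) (n : nat).
Notation vec := 'rV[R]_n.

Definition inner (x y : vec) : R := \sum_(i < n) x ord0 i * y ord0 i.
Definition nrm2 (x : vec) : R := Num.sqrt (inner x x).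

Definition diam (A : set vec) : R :=
  sup [set nrm2 (x - y) | x in A & y in A].

Definition conv_hull (A : set vec) : set vec :=
  [set z | exists k (v : 'I_k -> vec) (lam : 'I_k -> R),
     (forall i, A (v i)) /\ (forall i, 0 <= lam i) /\
     \sum_(i < k) lam i = 1 /\ z = \sum_(i < k) lam i *: v i].

Definition lin_span (A : set vec) : set vec :=
  [set z | exists k (v : 'I_k -> vec) (c : 'I_k -> R),
     (forall i, A (v i)) /\ z = \sum_(i < k) c i *: v i].

Definition ell (f : vec -> R) (grad : vec -> vec) (x y : vec) : R :=
  if x == y then 0
  else 2 * `|f y - f x - inner (grad x) (y - x)| / (nrm2 (y - x)) ^+ 2.

Definition convex_fun (f : vec -> R) : Prop :=
  forall (x y : vec) (lam : R), 0 <= lam <= 1 ->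
    f (lam *: x + (1 - lam) *: y) <= lam * f x + (1 - lam) * f y.

End ACFWDefs.

From HB Require Import structures.
From mathcomp Require Import all_boot all_order all_algebra.
From mathcomp Require Import all_classical all_reals all_analysis.
From mathcomp Require Import zify.
Import Order.TTheory GRing.Theory Num.Theory.
Import numFieldNormedType.Exports.
Local Open Scope classical_set_scope.
Local Open Scope ring_scope.

(* Only the bookkeeping of AC-FW matters: the iterates never increase f, and
   by the counting hypothesis more than k := ceil(at - b) - 1 indices s <= t
   lie in G ∩ I_eta, so the k-th of them, h k, is at most t.  Hence
   f(x_t) - f* <= f(x_{h k}) - f* <= rho k. *)

Lemma descent_nonincreasing (R : numDomainType) (T : Type) (F : T -> R)
    (x xbar : nat -> T) :
  (forall t, x t.+1 = if F (xbar t) < F (x t) then xbar t else x t) ->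
  {homo F \o x : s u / (s <= u)%N >-> u <= s}.
Proof.
move=> x_next; apply/nonincreasing_seqP => t /=.
by rewrite x_next; case: ifP => // /ltW.
Qed.

Lemma leq_enum_of_count_gt (P : pred nat) (h : nat -> nat) (t k : nat) :
  (forall i, (h i < h i.+1)%N) -> (forall s, P s -> exists i, h i = s) ->
  (k < count P (iota 0 t.+1))%N -> (h k <= t)%N.
Proof.
move=> h_incr h_onto k_lt_count; rewrite leqNgt; apply/negP => t_lt_hk.
have h_mono : {mono h : i j / (i <= j)%N}.
  exact/leq_mono/(homo_ltn ltn_trans h_incr).
have sub : {subset seq.filter P (iota 0 t.+1) <= map h (iota 0 k)}.
  move=> s; rewrite mem_filter mem_iota ltnS => /andP[/h_onto[i <-] hi_le_t].
  apply: map_f; rewrite mem_iota add0n /= ltnNge -h_mono.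
  by apply: contraTN t_lt_hk => /leq_trans/(_ hi_le_t); rewrite -leqNgt.
have := uniq_leq_size (filter_uniq P (iota_uniq 0 t.+1)) sub.
by rewrite size_filter size_map size_iota leqNgt k_lt_count.
Qed.

Lemma absz_ceil_sub1_lt (R : archiRealDomainType) (y : R) (K : nat) :
  1 <= y -> y <= K%:R -> (`|Num.ceil y - 1|%N < K)%N.
Proof.
move=> y_ge1 y_leK.
have ceil_pos : 0 < Num.ceil y by rewrite ceil_gt0 (lt_le_trans ltr01).
have ceil_leK : Num.ceil y <= K%:Z by rewrite ceil_le_int.
move: ceil_pos ceil_leK; generalize (Num.ceil y) => c; lia.
Qed.

Theorem corollary2 (R : realType) (n : nat)
  (A X : set 'rV[R]_n) (f : 'rV[R]_n -> R) (grad : 'rV[R]_n -> 'rV[R]_n)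
  (L eta : R) (xstar : 'rV[R]_n)
  (r : nat -> R)
  (xm1 : 'rV[R]_n) (x v d xbar : nat -> 'rV[R]_n)
  (gmax : nat -> \bar R) (gam Lt : nat -> R)
  (h : nat -> nat) (a b : R) (rho : nat -> R) :
  (* A compact (hence D_A < oo); X = conv(A) or X = lin(A) *)
  compact A ->
  (X = conv_hull A \/ X = lin_span A) ->
  (* f convex, differentiable, with gradient grad, which is L-Lipschitz *)
  convex_fun f ->
  (forall y, differentiable f y) ->
  (forall y u, 'd f y u = inner (grad y) u) ->
  (forall y z, nrm2 (grad y - grad z) <= L * nrm2 (y - z)) ->
  (* x* is an optimal solution of min_{x in X} f x *)
  X xstar -> (forall y, X y -> f xstar <= f y) ->
  (1 < eta < 2) ->
  (* AC-FW algorithm *)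
  A xm1 ->
  A (x 0%N) -> (forall u, A u -> inner (grad xm1) (x 0%N) <= inner (grad xm1) u) ->
  Lt 0%N = ell f grad xm1 (x 0%N) ->
  (forall t, A (v t) /\ (forall u, A u -> inner (grad (x t)) (v t) <= inner (grad (x t)) u)) ->
  (forall t, (0 < gmax t)%E) ->
  (forall t, ((gam t)%:E = mine ((inner (grad (x t)) (d t) / (Lt t * nrm2 (d t) ^+ 2))%:E)
                                (gmax t))%E) ->
  (forall t, xbar t = x t - gam t *: d t) ->
  (forall t, Lt t.+1 = Num.max (ell f grad (x t) (xbar t)) (r t * Lt t)) ->
  (forall t, x t.+1 = if f (xbar t) < f (x t) then xbar t else x t) ->
  (* Condition (D) *)
  (forall t, 0 < r t <= 1) ->
  (exists p : R, 0 < p <= 1 /\ (fun N => \prod_(i < N) r i) @ \oo --> p) ->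
  (* Condition (S) *)
  (forall t, nrm2 (d t) <= diam A /\
     (forall g : R, 0 <= g -> (g%:E <= gmax t)%E -> X (x t - g *: d t))) ->
  (forall N, exists t, (N <= t)%N /\ ((1 <= gmax t)%E || ((gam t)%:E < gmax t)%E)) ->
  (exists Rc : R, 1 <= Rc /\
     forall t, (f (x t) - f xstar) / Rc <= inner (grad (x t)) (d t)) ->
  (* h enumerates G ∩ I_eta in increasing order *)
  (forall t, (h t < h t.+1)%N) ->
  (forall s, (((1 <= gmax s)%E || ((gam s)%:E < gmax s)%E) && (Lt s.+1 <= eta * Lt s))
             <-> exists t, h t = s) ->
  (* counting hypothesis *)
  0 < a -> 0 <= b ->
  (forall t : nat,
     a * t%:R - b <=
     (count (fun s => ((1 <= gmax s)%E || ((gam s)%:E < gmax s)%E) && (Lt s.+1 <= eta * Lt s))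
            (iota 0 t.+1))%:R) ->
  (* rho : N -> R_+ nonincreasing, bounding the gap along h *)
  (forall t, 0 <= rho t) ->
  (forall s t, (s <= t)%N -> rho t <= rho s) ->
  (forall t, f (x (h t)) - f xstar <= rho t) ->
  forall t : nat, (b + 1) / a <= t%:R ->
    f (x t) - f xstar <= rho `|Num.ceil (a * t%:R - b) - 1|%N.
Proof.
move=> _ _ _ _ _ _ _ _ _ _ _ _ _ _ _ _ _ _ x_next _ _ _ _ _ h_incr h_enum a_gt0 _
  counting _ _ gap_h t t_large.
set P := (fun s => _ && _) in counting.
set k := `|Num.ceil (a * t%:R - b) - 1|%N.
have at_b_ge1 : 1 <= a * t%:R - b.
  by rewrite lerBrDr addrC mulrC -ler_pdivrMr.
have k_lt_count : (k < count P (iota 0 t.+1))%N.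
  exact: absz_ceil_sub1_lt at_b_ge1 (counting t).
have hk_le_t : (h k <= t)%N.
  by apply: leq_enum_of_count_gt h_incr _ k_lt_count => s /h_enum.
apply: le_trans (gap_h k); rewrite lerD2r.
exact: descent_nonincreasing x_next _ _ hk_le_t.
Qed.
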